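(* Let $\sigma$ be a strategy on an arena $A$. If $sm\in\sigma$ and $tn\in\sigma$ (with $m,n$ single move occurrences) and $\mathrm{GR}(s)=\mathrm{GR}(t)$, then there exists an $\mathcal O$-renaming $\varsigma$ such that $sm=(tn)\varsigma$.
   Context: First-order variables are split into three disjoint countable sets: $\mathcal A$-, $\mathcal O$- and $\mathcal P$-variables. $\mathcal{AP}$-terms (resp. $\mathcal{OP}$-terms) are first-order terms built from $\mathcal A$- and $\mathcal P$-variables (resp. $\mathcal O$- and $\mathcal P$-variables). Arena: a finite forest whose nodes (moves) carry a first-order label (a list of $\mathcal A$-variables, all distinct across the arena) and an atomic label (a list of atomic formulas $X\,t_1\dots t_k$ with $\mathcal{AP}$-terms whose $\mathcal A$-variables occur in the first-order label of the node or an ancestor). Polarity is depth parity: even = Opponent (O), odd = Player (P); roots are initial. Justified sequence: finite sequence of move occurrences; each non-initial occurrence has a $\lambda$-pointer to an earlier occurrence of its father; each element of the atomic label of an occurrence has at most one $\mu$-pointer to an element of the atomic label of an earlier occurrence of opposite polarity. Instantiations: each O-move occurrence carries an $\mathcal O$-instantiation (list of $\mathcal O$-variables of the length of its first-order label), each P-move occurrence a $\mathcal P$-instantiation (list of $\mathcal{OP}$-terms of that length); all $\mathcal O$-variables in $\mathcal O$-instantiations distinct. For an occurrence $m$ with instantiation $[t_1..t_k]$ and first-order label $[x_1..x_k]$, $\theta_m=\{x_i\mapsto t_i\}$ if $m$ is initial, else $\theta_n\cup\{x_i\mapsto t_i\}$ with $n$ its $\lambda$-justifier. Play: instantiated justified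 sequence with alternating polarities, no $\mu$-pointers from O-moves, exactly one $\mu$-pointer from each element of the atomic label of each P-move, every $\mu$-pointer from $X\,t_1..t_k$ at $m$ to $Y\,u_1..u_p$ at $n$ satisfying $X=Y$, $k=p$, $t_i\theta_m=u_i\theta_n$, and every $\mathcal O$-variable in a $\mathcal P$-instantiation occurring in an earlier $\mathcal O$-instantiation. An $\mathcal O$-renaming is an injection $\varsigma$ of $\mathcal O$-variables into themselves; $s\varsigma$ replaces each $o$ by $\varsigma(o)$ in all instantiations. Strategy: non-empty set of even-length plays closed under even-length prefixes, deterministic ($sm,sn\in\sigma\Rightarrow sm=sn$, including pointers and instantiations) and uniform (closed under $\mathcal O$-renamings). $\mathrm{GR}(s)$ is the sequence obtained from a play $s$ by erasing all instantiations and all $\mu$-pointers (keeping moves and $\lambda$-pointers). *)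

From HB Require Import structures.
From mathcomp Require Import all_boot.
Set Implicit Arguments. Unset Strict Implicit. Unset Printing Implicit Defensive.

Inductive var : Type := VA of nat | VO of nat | VP of nat.

Inductive term (F : Type) : Type :=
| Var of var
| App of F & seq (term F).
Arguments Var {F}.

Section Terms.
Variable F : Type.

Fixpoint subst (f : var -> term F) (t : term F) : term F :=
  match t with
  | Var v => f v
  | App g ts => App g (map (subst f) ts)
  end.

Fixpoint occurs (v : var) (t : term F) : Prop :=
  match t with
  | Var w => w = v
  | App _ ts => (fix occl (l : seq (term F)) : Prop :=
                   match l with nil => False | u :: l' => occurs v u \/ occl l' end) ts
  end.

Definition isA (v : var) : Prop := if v is VA _ then True else False.
Definition isO_var (v : var) : Prop := if v is VO _ then True else False.

Definition APterm (t : term F) : Prop := forall v, occurs v t -> ~ isO_var v.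
Definition OPterm (t : term F) : Prop := forall v, occurs v t -> ~ isA v.

(* atomic formula X t1 .. tk : second-order variable X (a nat) and the terms *)
Definition atom := (nat * seq (term F))%type.
End Terms.

(* An arena: finite forest of moves; [depth] is the depth in the forest
   (its consistency with [parent] is part of [arena_wf], which also forces
   acyclicity).  [fol] = first-order label (list of A-variable indices),
   [atl] = atomic label. *)
Record arena (F : Type) := Arena {
  amove : finType;
  parent : amove -> option amove;
  depth : amove -> nat;
  fol : amove -> seq nat;
  atl : amove -> seq (atom F)
}.

Section Games.
Variable F : Type.
Variable A : arena F.
Notation M := (amove A).

Definition ancestor_or_self (a m : M) : Prop :=
  exists n, iter n (fun o => obind (@parent F A) o) (Some m) = Some a.

Definition arena_wf : Prop :=
  (forall m : M, match parent m with
             | None => depth m = 0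
             | Some p => depth m = (depth p).+1
             end)
  /\ (forall m : M, uniq (fol m))
  /\ (forall (m m' : M) x, x \in fol m -> x \in fol m' -> m = m')
  /\ (forall (m : M) k, k < size (atl m) ->
        forall l, l < size (nth (0, [::]) (atl m) k).2 ->
        let t := nth (Var (VA 0)) (nth (0, [::]) (atl m) k).2 l in
        APterm t /\
        forall x, occurs (VA x) t -> exists a, ancestor_or_self a m /\ x \in fol a).

Definition isOm (m : M) : bool := ~~ odd (depth m).
Definition isPm (m : M) : bool := odd (depth m).

(* A move occurrence: the move, its lambda-pointer (absolute index of an
   earlier occurrence), one optional mu-pointer per element of the atomic
   label (pair: index of occurrence, index in its atomic label), and its
   instantiation. *)
Record occ := Occ {
  o_mv : M;
  o_jp : option nat;
  o_mu : seq (option (nat * nat));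
  o_inst : seq (term F)
}.

Definition dterm : term F := Var (VA 0).
Definition datom : atom F := (0, [::]).

Definition justified (s : seq occ) : Prop :=
  forall i e, onth s i = Some e ->
    (match parent (o_mv e) with
     | None => o_jp e = None
     | Some p => exists j e', o_jp e = Some j /\ j < i /\ onth s j = Some e' /\ o_mv e' = p
     end)
    /\ size (o_mu e) = size (atl (o_mv e))
    /\ (forall k j l, nth None (o_mu e) k = Some (j, l) ->
          exists e', j < i /\ onth s j = Some e' /\ l < size (atl (o_mv e'))
                     /\ isOm (o_mv e') != isOm (o_mv e)).

Definition instantiated (s : seq occ) : Prop :=
  (forall i e, onth s i = Some e ->
     size (o_inst e) = size (fol (o_mv e))
     /\ (isOm (o_mv e) -> forall k, k < size (o_inst e) ->
           exists o, nth dterm (o_inst e) k = Var (VO o))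
     /\ (isPm (o_mv e) -> forall k, k < size (o_inst e) -> OPterm (nth dterm (o_inst e) k)))
  /\ (forall i j e e' k l o,
        onth s i = Some e -> onth s j = Some e' -> isOm (o_mv e) -> isOm (o_mv e') ->
        k < size (o_inst e) -> l < size (o_inst e') ->
        nth dterm (o_inst e) k = Var (VO o) -> nth dterm (o_inst e') l = Var (VO o) ->
        i = j /\ k = l).

Fixpoint theta (fuel : nat) (s : seq occ) (i : nat) (x : nat) : term F :=
  match fuel with
  | 0 => Var (VA x)
  | fuel'.+1 =>
    match onth s i with
    | None => Var (VA x)
    | Some e =>
      if x \in fol (o_mv e) then nth (Var (VA x)) (o_inst e) (index x (fol (o_mv e)))
      else match o_jp e with
           | Some j => theta fuel' s j x
           | None => Var (VA x)
           end
    end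
  end.

Definition theta_at (s : seq occ) (i : nat) : var -> term F :=
  fun v => match v with VA x => theta i.+1 s i x | _ => Var v end.

Definition play (s : seq occ) : Prop :=
  justified s /\ instantiated s
  /\ (forall i e e', onth s i = Some e -> onth s i.+1 = Some e' ->
        isOm (o_mv e) != isOm (o_mv e'))
  /\ (forall i e, onth s i = Some e -> isOm (o_mv e) ->
        forall k, nth None (o_mu e) k = None)
  /\ (forall i e, onth s i = Some e -> isPm (o_mv e) ->
        forall k, k < size (o_mu e) -> nth None (o_mu e) k <> None)
  /\ (forall i e k j l e', onth s i = Some e -> nth None (o_mu e) k = Some (j, l) ->
        onth s j = Some e' ->
        (nth datom (atl (o_mv e)) k).1 = (nth datom (atl (o_mv e')) l).1
        /\ map (subst (theta_at s i)) (nth datom (atl (o_mv e)) k).2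
           = map (subst (theta_at s j)) (nth datom (atl (o_mv e')) l).2)
  /\ (forall i e k o, onth s i = Some e -> isPm (o_mv e) -> k < size (o_inst e) ->
        occurs (VO o) (nth dterm (o_inst e) k) ->
        exists j e' l, j < i /\ onth s j = Some e' /\ isOm (o_mv e')
                       /\ l < size (o_inst e') /\ nth dterm (o_inst e') l = Var (VO o)).

Definition rename_term (r : nat -> nat) : term F -> term F :=
  subst (fun v => match v with VO o => Var (VO (r o)) | _ => Var v end).

Definition rename_occ (r : nat -> nat) (e : occ) : occ :=
  Occ (o_mv e) (o_jp e) (o_mu e) (map (rename_term r) (o_inst e)).

Definition rename (r : nat -> nat) (s : seq occ) : seq occ := map (rename_occ r) s.

Definition GR (s : seq occ) : seq (M * option nat) :=
  map (fun e => (o_mv e, o_jp e)) s.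

Definition strategy (sigma : seq occ -> Prop) : Prop :=
  (exists s, sigma s)
  /\ (forall s, sigma s -> play s /\ ~~ odd (size s))
  /\ (forall s k, sigma s -> ~~ odd k -> k <= size s -> sigma (take k s))
  /\ (forall s a b, sigma (rcons s a) -> sigma (rcons s b) -> a = b)
  /\ (forall s (r : nat -> nat), injective r -> sigma s -> sigma (rename r s)).

End Games.

(* The plays sm and tn have the same moves and justification pointers, so
   they differ only in instantiations and mu-pointers.  At O-positions there
   are no mu-pointers and the instantiations consist of O-variables, each
   occurring only once in a play; matching the O-variables of tn with those
   of sm position by position is therefore a finite partial injection, which
   extends to an O-renaming r.  Then sm and (tn)r agree at every O-position,
   both belong to sigma by uniformity, and determinism forces them to agree
   at the P-positions as well. *)
From mathcomp Require Import all_boot.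
Set Implicit Arguments. Unset Strict Implicit. Unset Printing Implicit Defensive.

Lemma nth_onth (T : Type) (d : T) (s : seq T) i :
  i < size s -> onth s i = Some (nth d s i).
Proof. by move=> hi; rewrite onthE (nth_map d). Qed.

Lemma partial_injection_extends (P : seq (nat * nat)) :
  {in P &, forall p q, (p.1 == q.1) = (p.2 == q.2)} ->
  exists2 r : nat -> nat, injective r & {in P, forall p, r p.1 = p.2}.
Proof.
move=> hP; pose hit z (p : nat * nat) := p.1 == z.
pose b := (\max_(p <- P) p.2).+1.
pose r z := if has (hit z) P then (nth (0, 0) P (find (hit z) P)).2 else b + z.
have r_in z : has (hit z) P -> exists2 p, p \in P & p.1 = z /\ r z = p.2.
  move=> hz; exists (nth (0, 0) P (find (hit z) P)); first by rewrite mem_nth -?has_find.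
  by split; [apply/eqP; have := nth_find (0, 0) hz | rewrite /r hz].
have r_out z : ~~ has (hit z) P -> r z = b + z by rewrite /r => /negbTE ->.
(* values on the graph of P lie below b, values off it lie above *)
have lt_b p : p \in P -> p.2 < b by move=> hp; rewrite ltnS (leq_bigmax_seq _ hp).
have rP : {in P, forall p, r p.1 = p.2}.
  move=> p hp; have [|q hq [eq1 ->]] := r_in p.1; first by apply/hasP; exists p => //; rewrite /hit.
  by apply/eqP; rewrite -(hP _ _ hq hp) eq1.
exists r => // z z'.
case: (boolP (has (hit z) P)) => hz; case: (boolP (has (hit z') P)) => hz'.
- have [p hp [<- ->]] := r_in z hz; have [q hq [<- ->]] := r_in z' hz'.
  by move=> e; apply/eqP; rewrite hP // e.
- have [p hp [_ ->]] := r_in z hz; rewrite r_out // => e.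
  by have := lt_b p hp; rewrite e ltnNge leq_addr.
- have [p hp [_ ->]] := r_in z' hz'; rewrite r_out // => e.
  by have := lt_b p hp; rewrite -e ltnNge leq_addr.
- by rewrite !r_out //; apply: addnI.
Qed.

Section Plays.
Variables (F : Type) (A : arena F).
Implicit Types (s t : seq (occ A)) (d : occ A).

Lemma play_isOm (hA : arena_wf A) s d i :
  play s -> i < size s -> isOm (o_mv (nth d s i)) = ~~ odd i.
Proof.
move=> [hjust [_ [halt _]]]; elim: i => [|i IH] hi.
  have [hroot _] := hjust 0 _ (nth_onth d hi).
  have := hA.1 (o_mv (nth d s 0)); move: hroot.
  case: (parent _) => [p [j [e' [_ [+ _]]]]|_ h0]; first by rewrite ltn0.
  by rewrite /isOm h0.
have := halt i _ _ (nth_onth d (ltnW hi)) (nth_onth d hi).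
by rewrite IH ?(ltnW hi) //=; case: (isOm _); case: (odd i).
Qed.

Definition ovar (u : term F) : nat := if u is Var (VO o) then o else 0.

Definition inst_at d s i k : term F := nth (dterm F) (o_inst (nth d s i)) k.

Lemma inst_at_Ovar s d i k :
  instantiated s -> i < size s -> isOm (o_mv (nth d s i)) ->
  k < size (o_inst (nth d s i)) -> inst_at d s i k = Var (VO (ovar (inst_at d s i k))).
Proof.
move=> [hinst _] hi hO hk; have [_ [hOvar _]] := hinst _ _ (nth_onth d hi).
by rewrite /inst_at; have [o ->] := hOvar hO _ hk.
Qed.

Lemma inst_at_Ovar_inj s d i j k l :
  instantiated s -> i < size s -> j < size s ->
  isOm (o_mv (nth d s i)) -> isOm (o_mv (nth d s j)) ->
  k < size (o_inst (nth d s i)) -> l < size (o_inst (nth d s j)) ->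
  ovar (inst_at d s i k) = ovar (inst_at d s j l) -> i = j /\ k = l.
Proof.
move=> hs hi hj hOi hOj hk hl e.
have [_ hdistinct] := hs.
apply: (hdistinct _ _ _ _ _ _ (ovar (inst_at d s i k)) (nth_onth d hi) (nth_onth d hj)) => //.
  exact: (inst_at_Ovar hs).
by rewrite e; apply: (inst_at_Ovar hs).
Qed.

Definition Ovar_pairs d s t len : seq (nat * nat) :=
  [seq (ovar (inst_at d t i k), ovar (inst_at d s i k))
  | i <- [seq i <- iota 0 len | isOm (o_mv (nth d t i))],
    k <- iota 0 (size (o_inst (nth d t i)))].

Lemma Ovar_pairsP d s t len p :
  reflect (exists i k, [/\ i < len, isOm (o_mv (nth d t i)),
                          k < size (o_inst (nth d t i)) &
                          p = (ovar (inst_at d t i k), ovar (inst_at d s i k))])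
          (p \in Ovar_pairs d s t len).
Proof.
apply: (iffP allpairsPdep) => [[i [k]]|[i [k [hi hO hk ->]]]].
  rewrite mem_filter !mem_iota add0n => -[/andP[hO hi] hk ->].
  by exists i, k.
by exists i, k; rewrite mem_filter !mem_iota add0n hO hi hk.
Qed.

Lemma O_inst_renaming d s t len :
  instantiated s -> instantiated t -> len <= size s -> len <= size t ->
  (forall i, i < len -> o_mv (nth d s i) = o_mv (nth d t i)) ->
  exists2 r : nat -> nat, injective r &
    forall i, i < len -> isOm (o_mv (nth d t i)) ->
      o_inst (nth d s i) = map (rename_term r) (o_inst (nth d t i)).
Proof.
move=> hs ht hlens hlent hmv.
have inst_size i : i < len -> size (o_inst (nth d s i)) = size (o_inst (nth d t i)).
  move=> hi; have [hsz _] := hs.1 _ _ (nth_onth d (leq_trans hi hlens)).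
  by have [htz _] := ht.1 _ _ (nth_onth d (leq_trans hi hlent)); rewrite hsz htz hmv.
have slot i k : i < len -> isOm (o_mv (nth d t i)) -> k < size (o_inst (nth d t i)) ->
    [/\ i < size s, i < size t, isOm (o_mv (nth d s i)) & k < size (o_inst (nth d s i))].
  by move=> hi hO hk; rewrite (leq_trans hi hlens) (leq_trans hi hlent) hmv ?inst_size.
have [r rinj rP] : exists2 r : nat -> nat, injective r &
    {in Ovar_pairs d s t len, forall p, r p.1 = p.2}.
  apply: partial_injection_extends => p q.
  move=> /Ovar_pairsP[i [k [hi hO hk ->]]] /Ovar_pairsP[j [l [hj hO' hl ->]]] /=.
  have [his hit hOs hks] := slot _ _ hi hO hk.
  have [hjs hjt hOs' hls] := slot _ _ hj hO' hl.
  by apply/eqP/eqP => [/(inst_at_Ovar_inj ht)|/(inst_at_Ovar_inj hs)] [] // -> ->.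
exists r => // i hi hO.
apply: (@eq_from_nth _ (dterm F)); first by rewrite size_map inst_size.
move=> k; rewrite inst_size // => hk; rewrite (nth_map (dterm F)) //.
have [his hit hOs hks] := slot _ _ hi hO hk.
rewrite -[nth _ _ k]/(inst_at d s i k) -[nth _ _ k]/(inst_at d t i k).
rewrite (inst_at_Ovar hs) // (inst_at_Ovar ht) // /rename_term /=.
by rewrite (rP (_, ovar (inst_at d s i k))) //; apply/Ovar_pairsP; exists i, k.
Qed.

Lemma rename_occ_Omove s t d r i :
  play s -> play t -> i < size s -> i < size t ->
  o_mv (nth d s i) = o_mv (nth d t i) -> o_jp (nth d s i) = o_jp (nth d t i) ->
  isOm (o_mv (nth d t i)) ->
  o_inst (nth d s i) = map (rename_term r) (o_inst (nth d t i)) ->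
  nth d s i = rename_occ r (nth d t i).
Proof.
move=> [js [_ [_ [noMus _]]]] [jt [_ [_ [noMut _]]]] his hit hmv hjp hO hinst.
have [_ [szs _]] := js _ _ (nth_onth d his).
have [_ [szt _]] := jt _ _ (nth_onth d hit).
have hO' : isOm (o_mv (nth d s i)) by rewrite hmv.
rewrite /rename_occ -hmv -hjp -hinst.
suff <- : o_mu (nth d s i) = o_mu (nth d t i) by case: (nth d s i).
apply: (@eq_from_nth _ None) => [|k _]; first by rewrite szs szt hmv.
by rewrite (noMus _ _ (nth_onth d his) hO') (noMut _ _ (nth_onth d hit) hO).
Qed.

Lemma strategy_eq_of_Opositions (sigma : seq (occ A) -> Prop) d s t :
  strategy sigma -> sigma s -> sigma t -> size s = size t ->
  (forall i, i < size s -> ~~ odd i -> nth d s i = nth d t i) -> s = t.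
Proof.
move=> [_ [hplay [hprefix [hdet _]]]] hs ht hsz hO.
suff take_even j : j.*2 <= size s -> take j.*2 s = take j.*2 t.
  have [_ ev] := hplay _ hs.
  have hhalf : (size s)./2.*2 = size s by rewrite -[RHS]odd_double_half (negbTE ev).
  by have := take_even (size s)./2; rewrite hhalf take_size hsz take_size; apply.
elim: j => [|j IH]; first by rewrite !take0.
rewrite doubleS => hj; have hj1 : j.*2.+1 < size s by [].
have hodd : take j.*2.+1 s = take j.*2.+1 t.
  have hj2 : j.*2 < size s by apply: ltnW.
  by rewrite !(take_nth d) -?hsz // IH ?hO ?odd_double // ltnW.
have ev : ~~ odd j.*2.+2 by rewrite -doubleS odd_double.
have hj1t : j.*2.+1 < size t by rewrite -hsz.
have := hprefix _ _ ht ev hj1t; have := hprefix _ _ hs ev hj.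
rewrite (take_nth d hj1) (take_nth d hj1t) hodd => hns hnt.
by rewrite (hdet _ _ _ hns hnt).
Qed.

End Plays.

Theorem mainTheorem8 (F : Type) (A : arena F) (sigma : seq (occ A) -> Prop)
  (hA : arena_wf A) (hsigma : strategy sigma)
  (s t : seq (occ A)) (m n : occ A) :
  sigma (rcons s m) -> sigma (rcons t n) -> GR s = GR t ->
  exists r : nat -> nat, injective r /\ rcons s m = rename r (rcons t n).
Proof.
move=> hS hT hGR; have [_ [hplay [_ [_ huniform]]]] := hsigma.
have [[pS evS] [pT _]] := (hplay _ hS, hplay _ hT).
have hsz : size s = size t by have := congr1 size hGR; rewrite !size_map.
have szS : size (rcons s m) = (size t).+1 by rewrite size_rcons hsz.
have szT : size (rcons t n) = (size t).+1 by rewrite size_rcons.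
have same_GR i : i < size t -> o_mv (nth n (rcons s m) i) = o_mv (nth n (rcons t n) i)
                            /\ o_jp (nth n (rcons s m) i) = o_jp (nth n (rcons t n) i).
  move=> hi; rewrite !nth_rcons hsz hi.
  by have := congr1 (nth (o_mv n, o_jp n) ^~ i) hGR; rewrite !(nth_map n) ?hsz // => -[-> ->].
have [leS leT] : size t <= size (rcons s m) /\ size t <= size (rcons t n).
  by rewrite szS szT.
have [r rinj hr] := O_inst_renaming pS.2.1 pT.2.1 leS leT (fun i hi => (same_GR i hi).1).
exists r; split=> //.
apply: (strategy_eq_of_Opositions (d := n) hsigma hS (huniform _ _ rinj hT)) => [|i hi ev].
  by rewrite size_map szS szT.
have hit : i < size t.
  (* the last moves m and n sit at the odd index size t *)
  move: hi; rewrite szS ltnS leq_eqVlt => /orP[/eqP ei|//].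
  by move: evS; rewrite szS -ei /= ev.
have [hmv hjp] := same_GR i hit.
have hO : isOm (o_mv (nth n (rcons t n) i)) by rewrite (play_isOm hA) ?szT ?leqW.
rewrite (nth_map n) ?szT ?leqW //.
by apply: rename_occ_Omove; rewrite ?szS ?szT ?leqW //; apply: hr.
Qed.
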